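(* A signed bigraph $\widehat{G}$ is not chordal if and only if it contains a non-trivial induced subgraph which has no signed simplicial edge.
   Context: A signed graph is a finite simple graph each of whose edges is assigned a sign, positive or negative. A signed bigraph is a signed graph whose underlying graph is bipartite. An induced subgraph is obtained by deleting vertices only; it is non-trivial if it has at least one edge. A signed graph is positive if all its edges are positive. In a bigraph with bipartition $(X,Y)$, a subgraph $H$ is a biclique if every vertex of $V(H)\cap X$ is adjacent to every vertex of $V(H)\cap Y$. For an edge $uv$, $N(uv)=(N(u)\cup N(v))\setminus\{u,v\}$; $uv$ is signed simplicial (in the signed bigraph under consideration) if $N(uv)$ induces a positive biclique. A signed bigraph $\widehat G$ is chordal if its edges can be ordered $e_1,\dots,e_m$ so that each $e_i$ is signed simplicial in $\widehat G-\{e_1,\dots,e_{i-1}\}$ (edges deleted, vertices kept). *)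

From mathcomp Require Import all_boot.
Set Implicit Arguments. Unset Strict Implicit. Unset Printing Implicit Defensive.

(* A signed graph on a finite vertex type T is given by a symmetric,
   irreflexive adjacency relation [a] and a sign relation [s]
   (s x y = true means the edge xy is positive, false negative; only
   its values on edges matter).  Subgraphs are described by a vertex
   set [V : {set T}] (edges of the subgraph induced on V are the
   edges of [a] with both ends in V).  A bipartition is given by
   [X : {set T}] (with Y = complement of X). *)

Section SignedBigraph.
Variable T : finType.

Definition edgeV (V : {set T}) (a : rel T) (x y : T) : bool :=
  [&& x \in V, y \in V & a x y].

Definition Nedge (V : {set T}) (a : rel T) (u v : T) : {set T} :=
  [set w in V | [&& w != u, w != v & edgeV V a u w || edgeV V a v w]].

Definition positive_biclique (a s : rel T) (X S : {set T}) : Prop :=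
  (forall x y, x \in S -> y \in S -> a x y -> s x y) /\
  (forall x y, x \in S -> y \in S -> x \in X -> y \notin X -> a x y).

Definition signed_simplicial (V : {set T}) (a s : rel T) (X : {set T}) (u v : T) : Prop :=
  edgeV V a u v /\ positive_biclique a s X (Nedge V a u v).

Definition del_edges (a : rel T) (es : seq (T * T)) : rel T :=
  fun x y => a x y && ~~ has (fun p => (p == (x, y)) || (p == (y, x))) es.

Definition edge_ordering (a : rel T) (es : seq (T * T)) : Prop :=
  (forall p, p \in es -> a p.1 p.2) /\
  (forall x y, a x y -> count (fun p => (p == (x, y)) || (p == (y, x))) es = 1).

Definition chordal (a s : rel T) (X : {set T}) : Prop :=
  exists es : seq (T * T), edge_ordering a es /\
    forall (es1 : seq (T * T)) (p : T * T) (es2 : seq (T * T)),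
      es = es1 ++ p :: es2 ->
      signed_simplicial [set: T] (del_edges a es1) s X p.1 p.2.

Definition nontrivial (a : rel T) (W : {set T}) : Prop :=
  exists x y, edgeV W a x y.

End SignedBigraph.

(* If an edge ordering witnesses chordality, its first edge with both ends in
   an induced subgraph W is signed simplicial in W, because the edges deleted
   before it do not touch W.  Conversely, if every non-trivial induced
   subgraph has a signed simplicial edge, delete such an edge uv of the whole
   graph (u in X): the property survives, so induction on the number of edges
   builds an ordering.  For survival, only subgraphs W containing u and v
   matter.  Let B be the remaining neighbours of v in W.  If B is empty, v is
   isolated and W - v does the job.  Otherwise let U be the vertices of X - B
   in W all of whose remaining neighbours in W are positively joined to all of
   B; it contains u, because uv was simplicial.  Take a signed simplicial edge
   xy (x in X) of W - U.  Either no vertex of U is adjacent to y, and xy is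
   still signed simplicial in W, or one is; then y is positively joined to B,
   so x cannot lie outside B (it would belong to U), and vx is signed
   simplicial in W. *)

From mathcomp Require Import all_boot.
From Stdlib Require Import Classical.
Set Implicit Arguments. Unset Strict Implicit. Unset Printing Implicit Defensive.

Section SignedSimplicial.
Variables (T : finType) (s : rel T) (X : {set T}).

Definition bipartite (a : rel T) : Prop :=
  forall x y, a x y -> (x \in X) != (y \in X).

Definition simplicial_hereditary (a : rel T) : Prop :=
  forall W, nontrivial a W -> exists u v, signed_simplicial W a s X u v.

Lemma bipartite_edgeX a x y : bipartite a -> a x y -> x \in X -> y \notin X.
Proof. by move=> abip /abip; case: (x \in X); case: (y \in X). Qed.

Lemma bipartite_edgeCX a x y : bipartite a -> a x y -> x \notin X -> y \in X.
Proof. by move=> abip /abip; case: (x \in X); case: (y \in X). Qed.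

Lemma NedgeS (W : {set T}) a x y : Nedge W a x y \subset W.
Proof. by apply/subsetP => w; rewrite inE => /andP[]. Qed.

Lemma positive_bicliqueS (a b : rel T) (S S' : {set T}) :
  S' \subset S -> {in S' &, forall p q, a p q = b p q} ->
  positive_biclique b s X S -> positive_biclique a s X S'.
Proof.
move=> /subsetP sS'S ab [pos full]; split=> p q pS' qS'.
  by rewrite ab //; apply: pos; apply: sS'S.
by move=> pX qX; rewrite ab //; apply: full => //; apply: sS'S.
Qed.

Lemma signed_simplicialC (W : {set T}) a x y : symmetric a ->
  signed_simplicial W a s X x y -> signed_simplicial W a s X y x.
Proof.
move=> asym [/and3P[xW yW axy] biclique]; split; first by rewrite /edgeV xW yW asym.
suff -> : Nedge W a y x = Nedge W a x y by [].
by apply/setP => w; rewrite !inE [edgeV _ _ y w || _]orbC; case: (w != x); case: (w != y).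
Qed.

Lemma signed_simplicial_oriented (W : {set T}) a : symmetric a -> bipartite a ->
  (exists u v, signed_simplicial W a s X u v) ->
  exists2 u, u \in X & exists v, signed_simplicial W a s X u v.
Proof.
move=> asym abip [u [v uv]].
have [uX | uNX] := boolP (u \in X); first by exists u; last exists v.
exists v; last by exists u; apply: signed_simplicialC.
by case: uv => /and3P[_ _ auv] _; apply: bipartite_edgeCX auv uNX.
Qed.

Lemma signed_simplicial_extend (W W' : {set T}) (a b : rel T) x y :
  W' \subset W -> {in W' &, forall p q, a p q = b p q} ->
  {in W :\: W', forall w, ~~ b x w && ~~ b y w} ->
  signed_simplicial W' a s X x y -> signed_simplicial W b s X x y.
Proof.
move=> /subsetP sW'W ab out [/and3P[xW' yW' axy] biclique].
have NE : Nedge W b x y = Nedge W' a x y.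
  apply/setP => w; rewrite !inE /edgeV.
  have [wW' | wNW'] := boolP (w \in W').
    by rewrite !sW'W // xW' yW' -!ab.
  have [wW | //] := boolP (w \in W).
  have /andP[/negbTE-> /negbTE->] : ~~ b x w && ~~ b y w by apply: out; rewrite inE wNW'.
  by rewrite !andbF.
split; first by rewrite /edgeV !sW'W // -ab.
rewrite NE; apply: positive_bicliqueS biclique => //.
by move=> p q /(subsetP (NedgeS _ _ _ _)) pW' /(subsetP (NedgeS _ _ _ _)) qW'; rewrite ab.
Qed.

Lemma signed_simplicial_restrict (V W : {set T}) (a b : rel T) x y :
  W \subset V -> x \in W -> y \in W -> {in W &, forall p q, a p q = b p q} ->
  signed_simplicial V b s X x y -> signed_simplicial W a s X x y.
Proof.
move=> /subsetP sWV xW yW ab [/and3P[_ _ bxy] biclique]; split.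
  by rewrite /edgeV xW yW ab.
apply: positive_bicliqueS biclique; last first.
  by move=> p q /(subsetP (NedgeS _ _ _ _)) pW /(subsetP (NedgeS _ _ _ _)) qW; rewrite ab.
apply/subsetP => w; rewrite !inE /edgeV => /and4P[wW -> ->].
by rewrite !sWV // -!ab // xW yW wW; case/orP => ->; rewrite ?orbT.
Qed.

Lemma simplicial_hereditary_sub (a b : rel T) (W W' : {set T}) :
  simplicial_hereditary a -> symmetric b -> W' \subset W ->
  {in W' &, forall p q, a p q = b p q} ->
  {in W :\: W' & W, forall w z, ~~ b z w} ->
  nontrivial b W -> exists u v, signed_simplicial W b s X u v.
Proof.
move=> hered bsym sW'W ab isolated [x [y /and3P[xW yW bxy]]].
have inW' z z' : z \in W -> z' \in W -> b z z' -> z \in W'.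
  move=> zW z'W bzz'; apply: contraTT bzz' => zNW'.
  by rewrite bsym isolated // inE zNW'.
have [|u [v uv]] := hered W'.
  exists x, y; rewrite /edgeV (inW' x y) // (inW' y x) 1?bsym //=.
  by rewrite ab // ?(inW' x y) // (inW' y x) 1?bsym.
have [/and3P[uW' vW' _] _] := uv.
exists u, v; apply: signed_simplicial_extend uv => // w wW.
by rewrite !isolated ?(subsetP sW'W).
Qed.

Lemma del_edgesW (a : rel T) es x y : del_edges a es x y -> a x y.
Proof. by case/andP. Qed.

Lemma del_edges_sym (a : rel T) es : symmetric a -> symmetric (del_edges a es).
Proof.
move=> asym x y; rewrite /del_edges asym; congr (_ && ~~ _).
by apply: eq_has => p; rewrite orbC.
Qed.

Lemma chordal_simplicial_hereditary (a : rel T) :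
  chordal a s X -> simplicial_hereditary a.
Proof.
move=> [es [[es_edges es_count] es_simplicial]] W [x [y /and3P[xW yW axy]]].
pose inside p := (p.1 \in W) && (p.2 \in W).
have has_inside : has inside es.
  have : has (fun p => (p == (x, y)) || (p == (y, x))) es by rewrite has_count es_count.
  by case/hasP => p pes /orP[] /eqP pE; apply/hasP; exists p; rewrite // /inside pE /= xW yW.
move: es_simplicial; case: (split_find has_inside) => p es1 es2 insidep outside1.
rewrite cat_rcons => /(_ es1 p es2 erefl) pS.
case/andP: insidep => p1W p2W; exists p.1, p.2.
apply: signed_simplicial_restrict pS => // z z' zW z'W.
rewrite /del_edges; case: (boolP (has _ es1)) => [|_]; last by rewrite andbT.
by case/hasP => q qes1 /orP[] /eqP qE; move/hasPn: outside1 => /(_ q qes1);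
  rewrite /inside qE /= zW z'W.
Qed.

Lemma del_edges_cons (a : rel T) p es x y :
  del_edges a (p :: es) x y = del_edges (del_edges a [:: p]) es x y.
Proof. by rewrite /del_edges /= orbF negb_or andbA. Qed.

Lemma signed_simplicial_eq (W : {set T}) (a b : rel T) x y : a =2 b ->
  signed_simplicial W a s X x y -> signed_simplicial W b s X x y.
Proof.
by move=> ab; apply: signed_simplicial_extend => // w; rewrite setDv inE.
Qed.

Lemma chordal_edgeless (a : rel T) : (forall x y, ~~ a x y) -> chordal a s X.
Proof.
move=> edgeless; exists [::]; split; last by case.
by split=> // x y axy; move: (edgeless x y); rewrite axy.
Qed.

Lemma chordal_del_simplicial (a : rel T) u v : symmetric a ->
  signed_simplicial [set: T] a s X u v ->
  chordal (del_edges a [:: (u, v)]) s X -> chordal a s X.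
Proof.
move=> asym uv [es [[es_edges es_count] es_simplicial]].
pose is_uv x y := ((u, v) == (x, y)) || ((u, v) == (y, x)).
have del_uvE x y : del_edges a [:: (u, v)] x y = a x y && ~~ is_uv x y.
  by rewrite /del_edges /= orbF.
exists ((u, v) :: es); split; first split.
- move=> p; rewrite inE => /predU1P[-> | /es_edges /del_edgesW //].
  by case: uv => /and3P[].
- move=> x y axy /=; have [uvxy | uvNxy] := boolP (is_uv x y); last first.
    by rewrite es_count ?del_uvE ?axy // [_ || _](negbTE uvNxy).
  rewrite [_ || _]uvxy; congr _.+1; apply/eqP; rewrite -leqn0 leqNgt -has_count.
  apply/hasPn => q /es_edges; rewrite del_uvE; apply: contraL => /orP[] /eqP ->.
    by rewrite [is_uv _ _]uvxy andbF.
  by rewrite /is_uv orbC [_ || _]uvxy andbF.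
- case=> [|q es1] p es2 /= [<- es_split].
    by apply: signed_simplicial_eq uv => x y; rewrite /del_edges andbT.
  apply: signed_simplicial_eq (es_simplicial _ _ _ es_split) => x y.
  by rewrite del_edges_cons.
Qed.

Hypothesis ssym : symmetric s.

Section DeleteSimplicialEdge.
Variables (a : rel T) (u v : T).
Hypotheses (asym : symmetric a) (airr : irreflexive a) (abip : bipartite a).
Hypotheses (uX : u \in X) (uv_simplicial : signed_simplicial [set: T] a s X u v).
Hypothesis hered : simplicial_hereditary a.

Local Notation a' := (del_edges a [:: (u, v)]).

Lemma del_uvE x y :
  a' x y = a x y && ~~ ((u == x) && (v == y) || (u == y) && (v == x)).
Proof. by rewrite /del_edges /= orbF !xpair_eqE. Qed.

Lemma del_uv_sym : symmetric a'.
Proof. exact: del_edges_sym. Qed.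

Lemma del_uv_bipartite : bipartite a'.
Proof. by move=> x y /del_edgesW /abip. Qed.

Lemma del_uv_id x y : x != u -> y != u -> a' x y = a x y.
Proof. by move=> xu yu; rewrite del_uvE ![u == _]eq_sym (negbTE xu) (negbTE yu) andbT. Qed.

Lemma del_uv_vu : a' v u = false.
Proof. by rewrite del_uvE !eqxx orbT andbF. Qed.

Lemma v_notin_X : v \notin X.
Proof. by case: uv_simplicial => /and3P[_ _ auv] _; apply: bipartite_edgeX auv uX. Qed.

Lemma del_uv_nbrs_positive p q : a' v p -> a' u q -> a p q && s p q.
Proof.
move=> a'vp a'uq; have [_ [pos full]] := uv_simplicial.
have [avp auq] := (del_edgesW a'vp, del_edgesW a'uq).
have pN : p \in Nedge [set: T] a u v.
  rewrite !inE /edgeV !inE avp orbT andbT /=.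
  by apply/andP; split; [apply: contraTneq _ a'vp | apply: contraTneq _ avp] => ->;
    rewrite ?del_uv_vu ?airr.
have qN : q \in Nedge [set: T] a u v.
  rewrite !inE /edgeV !inE auq andbT /= andbT.
  by apply/andP; split; [apply: contraTneq _ auq | apply: contraTneq _ a'uq] => ->;
    rewrite ?airr // del_uv_sym del_uv_vu.
have apq := full p q pN qN (bipartite_edgeCX abip avp v_notin_X) (bipartite_edgeX abip auq uX).
by rewrite apq pos.
Qed.

Section InsideW.
Variable W : {set T}.
Hypotheses (uW : u \in W) (vW : v \in W).

Let B := [set p in W | a' v p].
Let joined_to_B q := [forall b in B, a b q && s b q].
Let U := [set p in W :&: X | (p \notin B) && [forall q in W, a' p q ==> joined_to_B q]].
Let W2 := W :\: U.

Lemma B_sub_X r : r \in B -> r \in X.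
Proof. by rewrite inE => /andP[_ /del_edgesW avr]; apply: bipartite_edgeCX avr v_notin_X. Qed.

Lemma U_sub_X p : p \in U -> p \in X.
Proof. by rewrite !inE => /andP[/andP[_ ->]]. Qed.

Lemma B_sub_W2 r : r \in B -> r \in W2.
Proof.
move=> rB; have /setIdP[rW _] := rB; rewrite inE rW andbT.
by apply: contraL rB; rewrite inE => /and3P[].
Qed.

Lemma notX_sub_W2 c : c \in W -> c \notin X -> c \in W2.
Proof. by move=> cW cNX; rewrite inE cW andbT; apply: contra cNX; apply: U_sub_X. Qed.

Lemma u_in_U : u \in U.
Proof.
rewrite !inE uW uX del_uv_vu andbF /=.
apply/forall_inP => q _; apply/implyP => a'uq; apply/forall_inP => b.
by rewrite inE => /andP[_ a'vb]; apply: del_uv_nbrs_positive.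
Qed.

Lemma W2_neq_u r : r \in W2 -> r != u.
Proof. by rewrite inE => /andP[rNU _]; apply: contraNneq _ rNU => ->; apply: u_in_U. Qed.

Section SimplicialEdgeOfW2.
Variables x y : T.
Hypotheses (xX : x \in X) (xy_simplicial : signed_simplicial W2 a s X x y).
Hypothesis y_joined : joined_to_B y.

Lemma B_x_nbr_positive r c :
  r \in B -> r != x -> c \in W -> a' x c -> a r c && s r c.
Proof.
move=> rB rx cW /del_edgesW axc; have [/and3P[xW2 yW2 _] [pos full]] := xy_simplicial.
have cNX := bipartite_edgeX abip axc xX.
have [-> | cy] := eqVneq c y; first by move/forall_inP: y_joined; apply.
have rN : r \in Nedge W2 a x y.
  have /andP[ary _] := forall_inP y_joined r rB.
  rewrite /Nedge /edgeV in_set (B_sub_W2 rB) rx xW2 yW2 (asym y r) ary /= orbT andbT.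
  by apply: contraTneq _ (B_sub_X rB) => ->; apply: bipartite_edgeX ary (B_sub_X rB).
have cN : c \in Nedge W2 a x y.
  rewrite /Nedge /edgeV in_set (notX_sub_W2 cW cNX) cy xW2 axc /= andbT.
  by apply: contraTneq _ axc => ->; rewrite airr.
have arc := full r c rN cN (B_sub_X rB) cNX.
by rewrite arc pos.
Qed.

Lemma x_in_B : x \in B.
Proof.
have [/and3P[xW2 _ _] _] := xy_simplicial.
apply: contraT => xNB; have /setDP[xW xNU] := xW2.
suff xU : x \in U by rewrite xU in xNU.
rewrite in_set in_setI xW xX xNB /=; apply/forall_inP => q qW; apply/implyP => a'xq.
apply/forall_inP => b bB; apply: B_x_nbr_positive => //.
by apply: contraNneq _ xNB => <-.
Qed.

Lemma vx_simplicial : signed_simplicial W a' s X v x.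
Proof.
have xB := x_in_B; have /setIdP[xW a'vx] := xB.
have joined r c : r \in Nedge W a' v x -> c \in Nedge W a' v x ->
    r \in X -> c \notin X -> a' r c && s r c.
  rewrite !inE /edgeV => /and4P[rW _ rx rnbr] /and4P[cW _ _ cnbr] rX cNX.
  have rB : r \in B.
    rewrite inE rW; case/orP: rnbr => /and3P[_ _ //] a'xr.
    by move: (bipartite_edgeX del_uv_bipartite a'xr xX); rewrite rX.
  have a'xc : a' x c.
    case/orP: cnbr => /and3P[_ _ //] a'vc.
    by move: (bipartite_edgeCX del_uv_bipartite a'vc v_notin_X); rewrite (negbTE cNX).
  rewrite del_uv_id; [exact: B_x_nbr_positive | exact: W2_neq_u (B_sub_W2 rB) |].
  by apply: contraNneq _ cNX => ->.
split; first by rewrite /edgeV vW xW.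
split=> p q pN qN; last by move=> pX qNX; case/andP: (joined p q pN qN pX qNX).
move=> a'pq; have [pX | pNX] := boolP (p \in X).
  by case/andP: (joined p q pN qN pX (bipartite_edgeX del_uv_bipartite a'pq pX)).
have qX := bipartite_edgeCX del_uv_bipartite a'pq pNX.
by rewrite ssym; case/andP: (joined q p qN pN qX pNX).
Qed.

End SimplicialEdgeOfW2.

Lemma simplicial_inside_W b0 : b0 \in B -> exists x y, signed_simplicial W a' s X x y.
Proof.
move=> b0B; have /setIdP[_ a'vb0] := b0B.
have W2_nontrivial : nontrivial a W2.
  exists v, b0; rewrite /edgeV (B_sub_W2 b0B) (del_edgesW a'vb0) andbT.
  by rewrite notX_sub_W2 // v_notin_X.
have [x xX [y xy]] := signed_simplicial_oriented asym abip (hered W2_nontrivial).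
have [/exists_inP[p pU a'py] | noU] := boolP [exists p in U, a' p y].
  have [/and3P[_ yW2 _] _] := xy; have /setDP[yW _] := yW2.
  exists v, x; apply: vx_simplicial xX xy _.
  by move: pU; rewrite inE => /and3P[_ _ /forall_inP/(_ y yW)]; rewrite a'py.
exists x, y; apply: signed_simplicial_extend xy; first exact: subsetDl.
  by move=> p q pW2 qW2; rewrite del_uv_id ?W2_neq_u.
move=> w /setDP[wW]; rewrite inE wW andbT negbK => wU.
apply/andP; split.
  by apply: contraL (U_sub_X wU) => /(bipartite_edgeX del_uv_bipartite)/(_ xX).
by rewrite del_uv_sym; move/exists_inPn: noU; apply.
Qed.

End InsideW.

Lemma simplicial_hereditary_del_uv : simplicial_hereditary a'.
Proof.
move=> W ntW; have [/andP[uW vW] | uvNW] := boolP ((u \in W) && (v \in W)); last first.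
  apply: (simplicial_hereditary_sub hered del_uv_sym (subxx W)) => // [p q pW qW | w z].
    rewrite del_uvE; case: (boolP (_ || _)) => [uv_pq | _]; last by rewrite andbT.
    by case/orP: uv_pq uvNW => /andP[/eqP-> /eqP->]; rewrite pW qW.
  by rewrite setDv inE.
case: (set_0Vmem [set p in W | a' v p]) => [noB | [b0 b0B]]; last first.
  exact: simplicial_inside_W b0B.
apply: (simplicial_hereditary_sub hered del_uv_sym (W' := W :\ v)) => //.
- exact: subD1set.
- move=> p q; rewrite !inE => /andP[pv _] /andP[qv _].
  by rewrite del_uvE ![v == _]eq_sym (negbTE pv) (negbTE qv) !andbF andbT.
- move=> w z /setDP[wW]; rewrite !inE wW andbT negbK => /eqP-> zW.
  rewrite del_uv_sym; apply/negP => a'vz.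
  by have := in_set0 z; rewrite -noB inE zW a'vz.
Qed.

End DeleteSimplicialEdge.

Lemma simplicial_hereditary_chordal (a : rel T) : symmetric a -> irreflexive a ->
  bipartite a -> simplicial_hereditary a -> chordal a s X.
Proof.
have [n] := ubnP #|[set p : T * T | a p.1 p.2]|.
elim: n a => // n IH a edges_lt asym airr abip hered.
case: (pickP (fun p : T * T => a p.1 p.2)) => [[x y] axy | edgeless]; last first.
  by apply: chordal_edgeless => x y; rewrite (edgeless (x, y)).
have ntT : nontrivial a [set: T] by exists x, y; rewrite /edgeV !inE.
have [u uX [v uv]] := signed_simplicial_oriented asym abip (hered _ ntT).
have [/and3P[_ _ auv] _] := uv.
apply: (chordal_del_simplicial asym uv (IH _ _ _ _ _ _)) => //.
- rewrite -ltnS (leq_trans _ edges_lt) // ltnS proper_card //; apply/properP; split.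
    by apply/subsetP => p; rewrite !inE; apply: del_edgesW.
  by exists (u, v); rewrite !inE //= del_uvE !eqxx andbF.
- exact: del_uv_sym.
- by move=> w; apply/negbTE/negP => /del_edgesW; rewrite airr.
- exact: del_uv_bipartite.
- exact: simplicial_hereditary_del_uv.
Qed.

End SignedSimplicial.

Theorem corollary5p2 (T : finType) (a s : rel T) (X : {set T}) :
  symmetric a -> irreflexive a -> symmetric s ->
  (forall x y, a x y -> (x \in X) != (y \in X)) ->
  (~ chordal a s X <->
   exists W : {set T}, nontrivial a W /\
     forall u v, ~ signed_simplicial W a s X u v).
Proof.
move=> asym airr ssym abip; split.
  move=> not_chordal; apply: NNPP => no_bad_subgraph; apply: not_chordal.
  apply: simplicial_hereditary_chordal => // W ntW; apply: NNPP => no_simplicial.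
  by apply: no_bad_subgraph; exists W; split=> // u v uv; apply: no_simplicial; exists u, v.
move=> [W [ntW no_simplicial]] /chordal_simplicial_hereditary /(_ W ntW) [u [v uv]].
exact: no_simplicial uv.
Qed.
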